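(* The polynomial algebra $P_n=K[x_1,\dots,x_n]$, with its natural $\mathbb{S}_n$-module structure, is up to isomorphism the only faithful simple $\mathbb{S}_n$-module. Consequently, the Jacobson radical of $\mathbb{S}_n$ is zero and $\mathbb{S}_n$ is a primitive algebra.
   Context: $K$ is a field. $\mathbb{S}_n$ is the $K$-algebra generated by $x_1,\dots,x_n,y_1,\dots,y_n$ subject to the defining relations $y_ix_i=1$ for all $i$, and $[x_i,y_j]=[x_i,x_j]=[y_i,y_j]=0$ for all $i\ne j$. The natural $\mathbb{S}_n$-module structure on $P_n$ is as follows: $x_i$ acts by multiplication; for a monomial $x^\alpha=x_1^{\alpha_1}\cdots x_n^{\alpha_n}$, $y_i$ sends $x^\alpha$ to $x^{\alpha}/x_i$ if $\alpha_i\ge1$ and to $0$ if $\alpha_i=0$. *)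

From HB Require Import structures.
From mathcomp Require Import all_boot all_order all_algebra.
Set Implicit Arguments. Unset Strict Implicit. Unset Printing Implicit Defensive.
Import GRing.Theory.
Local Open Scope ring_scope.

(* The polynomial algebra P_n = K[x_0,...,x_{n-1}], realised as       *)
(* iterated univariate polynomials: P_0 = K, P_{m+1} = P_m[x_m].      *)

Fixpoint mpolyR (K : comNzRingType) (n : nat) : comNzRingType :=
  if n is n'.+1 then ({poly mpolyR K n'} : comNzRingType) else K.

Fixpoint iconst (K : comNzRingType) (n : nat) (k : K) : mpolyR K n :=
  match n return mpolyR K n with
  | 0 => k
  | n'.+1 => ((@iconst K n' k)%:P : {poly mpolyR K n'})
  end.

Lemma iconstM (K : comNzRingType) n (a b : K) :
  iconst n (a * b) = iconst n a * iconst n b.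
Proof. by elim: n => [|n IH] //=; rewrite IH polyCM. Qed.

Lemma iconstD (K : comNzRingType) n (a b : K) :
  iconst n (a + b) = iconst n a + iconst n b.
Proof. by elim: n => [|n IH] //=; rewrite IH polyCD. Qed.

Lemma iconst1 (K : comNzRingType) n : iconst n (1 : K) = 1.
Proof. by elim: n => [|n IH] //=; rewrite IH. Qed.

Definition Pn (K : comNzRingType) (n : nat) : Type := mpolyR K n.
HB.instance Definition _ (K : comNzRingType) n :=
  GRing.ComNzRing.copy (Pn K n) (mpolyR K n).

Section PnLmod.
Variables (K : comNzRingType) (n : nat).
Definition Pn_scale (k : K) (p : Pn K n) : Pn K n := (iconst n k : Pn K n) * p.
Lemma Pn_scalerA a b v : Pn_scale a (Pn_scale b v) = Pn_scale (a * b) v.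
Proof. by rewrite /Pn_scale iconstM mulrA. Qed.
Lemma Pn_scale1r : left_id 1 Pn_scale.
Proof. by move=> v; rewrite /Pn_scale iconst1 mul1r. Qed.
Lemma Pn_scalerDr : right_distributive Pn_scale +%R.
Proof. by move=> a u v; rewrite /Pn_scale mulrDr. Qed.
Lemma Pn_scalerDl v : {morph Pn_scale^~ v : a b / a + b}.
Proof. by move=> a b; rewrite /Pn_scale iconstD mulrDl. Qed.
HB.instance Definition _ := GRing.Zmodule_isLmodule.Build K (Pn K n)
  Pn_scalerA Pn_scale1r Pn_scalerDr Pn_scalerDl.
End PnLmod.

Fixpoint xact (K : comNzRingType) (n : nat) : nat -> mpolyR K n -> mpolyR K n :=
  match n return nat -> mpolyR K n -> mpolyR K n with
  | 0 => fun _ p => p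
  | n'.+1 => fun i (p : {poly mpolyR K n'}) =>
      (if i == n' then 'X * p else map_poly (@xact K n' i) p : {poly mpolyR K n'})
  end.

(* y_i : x^a |-> x^a / x_i if a_i >= 1, and 0 otherwise *)
Fixpoint yact (K : comNzRingType) (n : nat) : nat -> mpolyR K n -> mpolyR K n :=
  match n return nat -> mpolyR K n -> mpolyR K n with
  | 0 => fun _ p => p
  | n'.+1 => fun i (p : {poly mpolyR K n'}) =>
      (if i == n' then \poly_(k < (size p).-1) p`_k.+1
       else map_poly (@yact K n' i) p : {poly mpolyR K n'})
  end.

(* Generators: inl i = x_i, inr i = y_i  (i : 'I_n).                  *)

Definition gen (n : nat) := ('I_n + 'I_n)%type.
Definition idx n (g : gen n) : 'I_n := match g with inl i => i | inr i => i end.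

Definition Pact (K : comNzRingType) n (g : gen n) : Pn K n -> Pn K n :=
  match g with inl i => @xact K n i | inr i => @yact K n i end.

(* elements of the free algebra K<x,y>: formal linear combinations of words;
   the word [:: g1; ...; gk] stands for the product g1 * ... * gk *)
Definition ncpoly (K : Type) n := seq (K * seq (gen n)).

Section SnDefs.
Variables (K : fieldType) (n : nat).

Definition coef (p : ncpoly K n) (w : seq (gen n)) : K :=
  \sum_(c <- p | c.2 == w) c.1.

Inductive relator : ncpoly K n -> Prop :=
| rel_inv (i : 'I_n) : relator [:: (1, [:: inr i; inl i]); (-1, [::])]
| rel_comm (g h : gen n) : idx g != idx h ->
    relator [:: (1, [:: g; h]); (-1, [:: h; g])].

(* the two-sided ideal of K<x,y> generated by the relators;
   p represents 0 in S_n iff in_I p *)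
Inductive in_I : ncpoly K n -> Prop :=
| I_rel p : relator p -> in_I p
| I_nil : in_I [::]
| I_add p q : in_I p -> in_I q -> in_I (p ++ q)
| I_scale (a : K) p : in_I p -> in_I [seq (a * c.1, c.2) | c <- p]
| I_lmul w p : in_I p -> in_I [seq (c.1, w ++ c.2) | c <- p]
| I_rmul w p : in_I p -> in_I [seq (c.1, c.2 ++ w) | c <- p]
| I_coef p q : in_I p -> (forall w, coef p w = coef q w) -> in_I q.

Section Modules.
Variable V : lmodType K.

Definition wact (act : gen n -> V -> V) (w : seq (gen n)) (v : V) : V :=
  foldr act v w.
Definition pact (act : gen n -> V -> V) (p : ncpoly K n) (v : V) : V :=
  \sum_(c <- p) c.1 *: wact act c.2 v.

Definition Smodule (act : gen n -> V -> V) : Prop :=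
  [/\ forall g a u v, act g (a *: u + v) = a *: act g u + act g v,
      forall (i : 'I_n) v, act (inr i) (act (inl i) v) = v &
      forall (g h : gen n), idx g != idx h ->
        forall v, act g (act h v) = act h (act g v)].

Definition submodule (act : gen n -> V -> V) (U : V -> Prop) : Prop :=
  [/\ U 0, forall a u v, U u -> U v -> U (a *: u + v) &
      forall g u, U u -> U (act g u)].

Definition simple_mod (act : gen n -> V -> V) : Prop :=
  (exists v : V, v != 0) /\
  forall U : V -> Prop, submodule act U ->
    (forall u, U u -> u = 0) \/ (forall v, U v).

Definition faithful (act : gen n -> V -> V) : Prop :=
  forall p : ncpoly K n, (forall v, pact act p v = 0) -> in_I p.
End Modules.

Definition Smod_iso (U V : lmodType K) (actU : gen n -> U -> U)
  (actV : gen n -> V -> V) : Prop :=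
  exists f : U -> V,
    [/\ bijective f, forall a u v, f (a *: u + v) = a *: f u + f v &
        forall g u, f (actU g u) = actV g (f u)].

(* Jacobson radical = intersection of annihilators of simple left modules *)
Definition jacobson_radical (p : ncpoly K n) : Prop :=
  forall (V : lmodType K) (act : gen n -> V -> V),
    Smodule act -> simple_mod act -> forall v, pact act p v = 0.

Definition jacobson_zero : Prop :=
  forall p : ncpoly K n, jacobson_radical p -> in_I p.

Definition primitive : Prop :=
  exists (V : lmodType K) (act : gen n -> V -> V),
    [/\ Smodule act, simple_mod act & faithful act].

End SnDefs.

From HB Require Import structures.
From mathcomp Require Import all_boot all_order all_algebra ring.
From Stdlib Require Import Classical ClassicalEpsilon.
Set Implicit Arguments. Unset Strict Implicit. Unset Printing Implicit Defensive.
Import GRing.Theory.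
Local Open Scope ring_scope.

(* 1. P_n is an S_n-module (x_i and y_i act coefficientwise on the iterated
      polynomial ring), and it is simple: suitable y's send any nonzero
      polynomial to a nonzero constant, and 1 generates P_n.
   2. The defining ideal I annihilates every module, and every word equals a
      normal monomial x^a y^b in S_n, so an element of K<x,y> lies in I as
      soon as its coefficients on the normal monomials vanish.
   3. Call u a vacuum vector if y_i u = 0 for all i.  On such u the action of
      y^b' x^b is explicit, and E = prod_i (1 - x_i y_i) satisfies
      E y^a0 x^a u = [a = a0] u.  These functionals read off normal-form
      coefficients: a module with a nonzero vacuum vector (such as P_n, with
      u = 1) is faithful, and if q 1 = 0 in P_n then q kills every vacuum vector.
   4. In a faithful module E is nonzero, since E 1 = 1 in P_n, so there is a
      nonzero vacuum vector u; if the module is simple, q 1 |-> q u is an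
      isomorphism from P_n.
   5. J(S_n) lies in the annihilator of the faithful simple module P_n. *)

Section PolynomialOperators.
Variable K : comNzRingType.

Lemma xactS m i (p : {poly mpolyR K m}) :
  @xact K m.+1 i p = (if i == m then 'X * p else map_poly (@xact K m i) p : {poly _}).
Proof. by []. Qed.

Lemma yactS m i (p : {poly mpolyR K m}) :
  @yact K m.+1 i p = (if i == m then \poly_(k < (size p).-1) p`_k.+1
                      else map_poly (@yact K m i) p : {poly _}).
Proof. by []. Qed.

Lemma iconstS m (a : K) : iconst m.+1 a = (iconst m a)%:P :> {poly mpolyR K m}.
Proof. by []. Qed.

Lemma iconstN1 m : iconst m (-1 : K) = -1.
Proof. by elim: m => [|m IH] //; rewrite iconstS IH polyCN. Qed.

Lemma xact0 m i : @xact K m i 0 = 0.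
Proof.
by elim: m => [|m IH] //; rewrite xactS; case: eqP => _; rewrite ?mulr0 ?map_poly0.
Qed.

Lemma yact0 m i : @yact K m i 0 = 0.
Proof.
elim: m => [|m IH] //; rewrite yactS; case: eqP => _; rewrite ?map_poly0 //.
by apply/polyP => k; rewrite coef_poly coef0 nth_default ?if_same // polyseq0.
Qed.

Lemma coef_xact_top m (p : {poly mpolyR K m}) k :
  (@xact K m.+1 m p : {poly _})`_k = if k == 0%N then 0 else p`_k.-1.
Proof. by rewrite xactS eqxx coefXM. Qed.

Lemma coef_xact_low m i (p : {poly mpolyR K m}) k : i != m ->
  (@xact K m.+1 i p : {poly _})`_k = @xact K m i p`_k.
Proof. by move=> /negPf hi; rewrite xactS hi coef_map_id0 // xact0. Qed.

Lemma coef_yact_top m (p : {poly mpolyR K m}) k :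
  (@yact K m.+1 m p : {poly _})`_k = p`_k.+1.
Proof.
rewrite yactS eqxx coef_poly; case: ifP => // /negbT; rewrite -leqNgt => h.
by rewrite nth_default // (leq_trans (leqSpred _)) // ltnS.
Qed.

Lemma coef_yact_low m i (p : {poly mpolyR K m}) k : i != m ->
  (@yact K m.+1 i p : {poly _})`_k = @yact K m i p`_k.
Proof. by move=> /negPf hi; rewrite yactS hi coef_map_id0 // yact0. Qed.

Lemma xact_linear m i a (u v : mpolyR K m) :
  @xact K m i (iconst m a * u + v) = iconst m a * @xact K m i u + @xact K m i v.
Proof.
elim: m => [|m IH] in u v *; first by [].
rewrite iconstS; apply/polyP => k; have [->|hi] := eqVneq i m.
  by rewrite !(coefD, coef_xact_top, coefCM); case: k => [|k] /=; rewrite ?mulr0 ?addr0.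
by rewrite !(coefD, coef_xact_low, coefCM) // IH.
Qed.

Lemma yact_linear m i a (u v : mpolyR K m) :
  @yact K m i (iconst m a * u + v) = iconst m a * @yact K m i u + @yact K m i v.
Proof.
elim: m => [|m IH] in u v *; first by [].
rewrite iconstS; apply/polyP => k; have [->|hi] := eqVneq i m.
  by rewrite !(coefD, coef_yact_top, coefCM).
by rewrite !(coefD, coef_yact_low, coefCM) // IH.
Qed.

Lemma yact_xact m i (u : mpolyR K m) : @yact K m i (@xact K m i u) = u.
Proof.
elim: m => [|m IH] in u *; first by [].
apply/polyP => k; have [->|hi] := eqVneq i m; first by rewrite coef_yact_top coef_xact_top.
by rewrite !coef_yact_low ?coef_xact_low ?IH.
Qed.

Lemma yact1 m i : (i < m)%N -> @yact K m i 1 = 0.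
Proof.
elim: m => [|m IH] // hi; apply/polyP => k; rewrite coef0.
have [->|him] := eqVneq i m; first by rewrite coef_yact_top coef1.
rewrite coef_yact_low // coef1; case: k => [|k] /=; last by rewrite yact0.
by rewrite IH // ltn_neqAle him -ltnS.
Qed.

(* x_i (b = false) or y_i (b = true), to treat the commutation relations uniformly. *)
Definition xyact (b : bool) m i : mpolyR K m -> mpolyR K m :=
  if b then @yact K m i else @xact K m i.
Arguments xyact : clear implicits.

Lemma coef_xyact_low b m i (p : {poly mpolyR K m}) k : i != m ->
  (xyact b m.+1 i p : {poly _})`_k = xyact b m i p`_k.
Proof. by case: b => hi; rewrite /xyact ?coef_xact_low ?coef_yact_low. Qed.

Lemma xyact_comm m b1 b2 i j (u : mpolyR K m) : i != j ->
  xyact b1 m i (xyact b2 m j u) = xyact b2 m j (xyact b1 m i u).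
Proof.
elim: m => [|m IH] in b1 b2 u *; first by case: b1; case: b2.
move=> hij; apply/polyP => k.
have top_low l : l != m -> forall b b' (v : {poly mpolyR K m}),
    (xyact b m.+1 m (xyact b' m.+1 l v) : {poly _})`_k
    = (xyact b' m.+1 l (xyact b m.+1 m v) : {poly _})`_k.
  move=> hl b b' v; rewrite [RHS]coef_xyact_low //.
  case: b; rewrite /xyact ?coef_yact_top ?coef_xact_top -/(xyact b' m.+1 l v)
    ?coef_xyact_low //.
  by case: k => [|k] //=; case: b'; rewrite /xyact ?xact0 ?yact0.
have [ei|hi] := eqVneq i m; first by subst i; apply: top_low; rewrite eq_sym.
have [ej|hj] := eqVneq j m; first by subst j; rewrite top_low.
by rewrite !coef_xyact_low // IH.
Qed.

Lemma mpoly_generated m (C : mpolyR K m -> Prop) : C 1 ->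
  (forall a u v, C u -> C v -> C (iconst m a * u + v)) ->
  (forall i, (i < m)%N -> forall u, C u -> C (@xact K m i u)) -> forall p, C p.
Proof.
have C0 l (D : mpolyR K l -> Prop) : D 1 ->
    (forall a u v, D u -> D v -> D (iconst l a * u + v)) -> D 0.
  by move=> D1 Dl; have := Dl (-1) _ _ D1 D1; rewrite iconstN1 mulN1r addNr.
elim: m => [|m IH] in C *.
  move=> C1 Cl _ p; have := Cl p 1 0 C1 (C0 _ _ C1 Cl).
  by rewrite /= mulr1 addr0.
move=> C1 Cl Cx.
have CX k : C 'X^k.
  elim: k => [|k IHk]; first by rewrite expr0.
  by rewrite exprS; have := Cx m (ltnSn m) _ IHk; rewrite xactS eqxx.
have Cmonomial q k : C (q%:P * 'X^k).
  move: q k; apply: IH.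
  - by move=> k; rewrite mul1r.
  - move=> a u v Cu Cv k; rewrite polyCD polyCM mulrDl -mulrA -iconstS.
    exact: Cl.
  - move=> i hi u Cu k.
    have -> : (@xact K m i u)%:P * 'X^k = @xact K m.+1 i (u%:P * 'X^k).
      apply/polyP => j; rewrite coef_xact_low ?(ltn_eqF hi) // !coefMXn.
      by case: ifP => _; rewrite ?xact0 // !coefC; case: eqP => _; rewrite ?xact0.
    exact/Cx/Cu/ltnW.
move=> p; rewrite -[p]coefK poly_def; elim/big_ind: _ => [||k _].
- exact: C0 C1 Cl.
- by move=> u v Cu Cv; have := Cl 1 u v Cu Cv; rewrite iconst1 mul1r.
- by rewrite -mul_polyC.
Qed.

(* Every nonzero polynomial is sent to a nonzero constant by a suitable
   product of the y_i: lower the degree in x_{m-1} to zero, then recurse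
   on the leading coefficient. *)
Lemma yact_to_constant m (p : mpolyR K m) : p != 0 ->
  exists js : seq nat, exists c : K,
    [/\ all (fun i => (i < m)%N) js, c != 0 &
        foldr (@yact K m) p js = iconst m c].
Proof.
elim: m => [|m IH] in p * => hp; first by exists [::], p.
pose d := (size (p : {poly mpolyR K m})).-1.
have coef_iter k j : (iter k (@yact K m.+1 m) p : {poly _})`_j = (p : {poly _})`_(j + k).
  elim: k j => [|k IHk] j; first by rewrite addn0.
  by rewrite iterS coef_yact_top IHk addSnnS.
have iter_lead : iter d (@yact K m.+1 m) p = (lead_coef (p : {poly mpolyR K m}))%:P.
  apply/polyP => j; rewrite coef_iter coefC lead_coefE; case: j => [|j] //=.
  rewrite nth_default // /d addSn -addnS.
  by case: (size _) => [|s] //=; rewrite addnS ltnS leq_addl.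
have hl : lead_coef (p : {poly mpolyR K m}) != 0 by rewrite lead_coef_eq0.
have [js [c [hjs hc hf]]] := IH _ hl.
exists (js ++ nseq d m), c; split => //.
  rewrite all_cat (sub_all _ hjs) /=; last by move=> i; apply: ltnW.
  by apply/allP => i /nseqP [-> _].
rewrite foldr_cat (_ : foldr _ p (nseq d m) = iter d (@yact K m.+1 m) p); last first.
  by elim: (d) => [|k IHk] //=; rewrite IHk.
rewrite iter_lead iconstS -hf.
elim: js hjs {hf} => [|i js IHjs] //= /andP [hi hjs].
rewrite IHjs //; apply/polyP => j; rewrite coef_yact_low ?(ltn_eqF hi) // !coefC.
by case: eqP => _; rewrite ?yact0.
Qed.

End PolynomialOperators.

Section PolynomialModule.
Variables (K : fieldType) (n : nat).

Lemma Pn_Smodule : Smodule (@Pact K n).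
Proof.
split.
- by case=> i a u v; [apply: xact_linear | apply: yact_linear].
- by move=> i v; apply: yact_xact.
- case=> i; case=> j /= hij v.
  + exact: (xyact_comm false false v hij).
  + exact: (xyact_comm false true v hij).
  + exact: (xyact_comm true false v hij).
  + exact: (xyact_comm true true v hij).
Qed.

Lemma Pact_y1 (i : 'I_n) : @Pact K n (inr i) 1 = 0.
Proof. exact: yact1 (ltn_ord i). Qed.

(* A nonzero submodule contains a nonzero constant (by [yact_to_constant]),
   hence 1, hence everything (by [mpoly_generated]). *)
Lemma Pn_simple : simple_mod (@Pact K n).
Proof.
split; first by exists (1 : Pn K n); apply: oner_neq0.
move=> U [U0 Ulin Uact].
have [[u [Uu u_neq0]]|no_nonzero] := classic (exists u, U u /\ u != 0); last first.
  by left=> u Uu; apply: NNPP => u_neq0; apply: no_nonzero; exists u; split => //; apply/eqP.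
right; have [js [c [hjs c_neq0 hf]]] := yact_to_constant u_neq0.
have Uc : U (iconst n c : Pn K n).
  rewrite -hf; elim: js hjs {hf} => [|i js IHjs] //= /andP [hi hjs].
  exact: (Uact (inr (Ordinal hi)) _ (IHjs hjs)).
have U1 : U (1 : Pn K n).
  have := Ulin c^-1 _ _ Uc U0; rewrite addr0.
  suff -> : c^-1 *: (iconst n c : Pn K n) = 1 by [].
  by rewrite /GRing.scale /= /Pn_scale -iconstM mulVf // iconst1.
apply: (mpoly_generated U1) => [a u' v'|i hi u']; first exact: Ulin.
exact: (Uact (inl (Ordinal hi))).
Qed.

End PolynomialModule.

Section LinearMaps.
Variables (K : fieldType) (V : lmodType K).

Definition is_linear (f : V -> V) := forall a u v, f (a *: u + v) = a *: f u + f v.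

Variable f : V -> V.
Hypothesis f_lin : is_linear f.

Lemma lin0 : f 0 = 0.
Proof.
have := f_lin 1 0 0; rewrite !scale1r !addr0 => /(congr1 (fun x => x - f 0)).
by rewrite subrr addrK.
Qed.

Lemma linD u v : f (u + v) = f u + f v.
Proof. by have := f_lin 1 u v; rewrite !scale1r. Qed.

Lemma linZ a u : f (a *: u) = a *: f u.
Proof. by have := f_lin a u 0; rewrite !addr0 lin0 addr0. Qed.

Lemma linB u v : f (u - v) = f u - f v.
Proof. by rewrite linD -scaleN1r linZ scaleN1r. Qed.

Lemma lin_sum I (r : seq I) (P : pred I) (F : I -> V) :
  f (\sum_(i <- r | P i) F i) = \sum_(i <- r | P i) f (F i).
Proof. exact: (big_morph f linD lin0). Qed.

End LinearMaps.

Lemma lin_comp (K : fieldType) (V : lmodType K) (f g : V -> V) :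
  is_linear f -> is_linear g -> is_linear (fun v => f (g v)).
Proof. by move=> hf hg a u v /=; rewrite hg hf. Qed.

Section ModuleActions.
Variables (K : fieldType) (n : nat) (V : lmodType K) (act : gen n -> V -> V).
Hypothesis act_Smod : Smodule act.

Lemma act_lin g : is_linear (act g).
Proof. by case: act_Smod => h _ _ a u v; apply: h. Qed.

Lemma act_yx i v : act (inr i) (act (inl i) v) = v.
Proof. by case: act_Smod => _ h _; apply: h. Qed.

Lemma act_comm g h v : idx g != idx h -> act g (act h v) = act h (act g v).
Proof. by case: act_Smod => _ _ H /H; apply. Qed.

Lemma wact_cons g w v : wact act (g :: w) v = act g (wact act w v).
Proof. by []. Qed.

Lemma wact_cat u w v : wact act (u ++ w) v = wact act u (wact act w v).
Proof. by rewrite /wact foldr_cat. Qed.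

Lemma wact_lin w : is_linear (wact act w).
Proof. by elim: w => [|g w IH] a u v //; rewrite !wact_cons IH act_lin. Qed.

Lemma act_wact_comm g s v : (forall h, h \in s -> idx h != idx g) ->
  act g (wact act s v) = wact act s (act g v).
Proof.
elim: s => [|h s IH] hs //; rewrite !wact_cons act_comm; last first.
  by rewrite eq_sym; apply: hs; rewrite mem_head.
by rewrite IH // => h' hh'; apply: hs; rewrite in_cons hh' orbT.
Qed.

Lemma pact_cat p q v : pact act (p ++ q) v = pact act p v + pact act q v.
Proof. by rewrite /pact big_cat. Qed.

Lemma pact_scale a p v :
  pact act [seq (a * c.1, c.2) | c <- p] v = a *: pact act p v.
Proof. by rewrite /pact big_map scaler_sumr; apply: eq_bigr => c _; rewrite scalerA. Qed.

Lemma pact_lmul w p v :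
  pact act [seq (c.1, w ++ c.2) | c <- p] v = wact act w (pact act p v).
Proof.
rewrite /pact big_map (lin_sum (wact_lin w)); apply: eq_bigr => c _ /=.
by rewrite wact_cat (linZ (wact_lin w)).
Qed.

Lemma pact_rmul w p v :
  pact act [seq (c.1, c.2 ++ w) | c <- p] v = pact act p (wact act w v).
Proof. by rewrite /pact big_map; apply: eq_bigr => c _ /=; rewrite wact_cat. Qed.

End ModuleActions.

Lemma sum_pick (M : nmodType) (key : eqType) (s : seq key) (k0 : key) (G : key -> M) :
  uniq s -> \sum_(k <- s) (if k == k0 then G k else 0) = if k0 \in s then G k0 else 0.
Proof.
move=> s_uniq; case: ifP => k0s.
  by rewrite (bigD1_seq k0) //= eqxx big1 ?addr0 // => k /negPf ->.
rewrite big1_seq // => k /andP [_ ks]; case: eqP => // ek.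
by rewrite -ek ks in k0s.
Qed.

Lemma sum_group (M : nmodType) (T key : eqType) (h : T -> key) (F : T -> M)
    (p : seq T) (s : seq key) : uniq s -> (forall c, c \in p -> h c \in s) ->
  \sum_(c <- p) F c = \sum_(k <- s) \sum_(c <- p | h c == k) F c.
Proof.
move=> s_uniq hs; rewrite (exchange_big_dep xpredT) //=; apply: eq_big_seq => c cp.
rewrite big_mkcond (eq_bigr (fun k => if k == h c then F c else 0)).
  by rewrite sum_pick // hs.
by move=> k _; rewrite eq_sym.
Qed.

Section IdealAnnihilates.
Variables (K : fieldType) (n : nat) (V : lmodType K) (act : gen n -> V -> V).
Hypothesis act_Smod : Smodule act.

Lemma pact_coef (p q : ncpoly K n) v : (forall w, coef p w = coef q w) ->
  pact act p v = pact act q v.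
Proof.
move=> hpq; set s := undup (map snd (p ++ q)).
have group (r : ncpoly K n) : {subset map snd r <= s} ->
    pact act r v = \sum_(w <- s) coef r w *: wact act w v.
  move=> rs; rewrite /pact (@sum_group _ _ _ snd (fun c => c.1 *: wact act c.2 v) r s
    (undup_uniq _)) => [|c cr]; last exact/rs/map_f.
  by apply: eq_bigr => w _; rewrite scaler_suml; apply: eq_bigr => c /eqP ->.
rewrite !group => [|w wq|w wp]; first by apply: eq_bigr => w _; rewrite hpq.
  by rewrite mem_undup map_cat mem_cat wq orbT.
by rewrite mem_undup map_cat mem_cat wp.
Qed.

Lemma ideal_annihilates p : in_I p -> forall v, pact act p v = 0.
Proof.
elim=> {p} [p []|| p q _ IHp _ IHq | a p _ IH | w p _ IH | w p _ IH | p q _ IH hc] v.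
- move=> i; rewrite /pact !big_cons big_nil /= (act_yx act_Smod).
  by rewrite scaleN1r scale1r addr0 subrr.
- move=> g h gh; rewrite /pact !big_cons big_nil /= (act_comm act_Smod) //.
  by rewrite scaleN1r scale1r addr0 subrr.
- by rewrite /pact big_nil.
- by rewrite pact_cat IHp IHq addr0.
- by rewrite pact_scale IH scaler0.
- by rewrite (pact_lmul act_Smod) IH (lin0 (wact_lin act_Smod w)).
- by rewrite pact_rmul IH.
- by rewrite -(pact_coef _ hc) IH.
Qed.

End IdealAnnihilates.

Section WordEquivalence.
Variables (K : fieldType) (n : nat).
Notation word := (seq (gen n)).

Lemma coef_nil w : coef ([::] : ncpoly K n) w = 0.
Proof. by rewrite /coef big_nil. Qed.

Lemma coef_cons (c : K * word) p w :
  coef (c :: p) w = (if c.2 == w then c.1 else 0) + coef p w.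
Proof. by rewrite /coef big_cons; case: ifP; rewrite ?add0r. Qed.

Definition wequiv (u w : word) := in_I [:: ((1 : K), u); (-1, w)].

Lemma wequiv_refl u : wequiv u u.
Proof.
apply: (I_coef (@I_nil K n)) => z; rewrite !coef_cons !coef_nil /=.
by case: (u == z); rewrite ?addr0 ?subrr.
Qed.

Lemma wequiv_trans u v w : wequiv u v -> wequiv v w -> wequiv u w.
Proof.
move=> huv hvw; apply: (I_coef (I_add huv hvw)) => z.
rewrite !coef_cons !coef_nil /= !addr0.
by case: (v == z); rewrite ?addr0 ?add0r // addKr.
Qed.

Lemma wequiv_ctx w1 w2 u w : wequiv u w -> wequiv (w1 ++ u ++ w2) (w1 ++ w ++ w2).
Proof. by move=> h; have := I_lmul w1 (I_rmul w2 h); rewrite /wequiv /= !catA. Qed.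

Lemma wequiv_cons g u w : wequiv u w -> wequiv (g :: u) (g :: w).
Proof. by move=> /(wequiv_ctx [:: g] [::]); rewrite !cats0. Qed.

Lemma wequiv_yx i : wequiv [:: inr i; inl i] [::].
Proof. exact/I_rel/rel_inv. Qed.

Lemma wequiv_move g s w : (forall h, h \in s -> idx h != idx g) ->
  wequiv (g :: s ++ w) (s ++ g :: w).
Proof.
elim: s => [|h s IH] hs /=; first exact: wequiv_refl.
apply: (@wequiv_trans _ (h :: g :: s ++ w)).
  apply: (wequiv_ctx [::] (s ++ w) (_ : wequiv [:: g; h] [:: h; g])).
  by apply/I_rel/rel_comm; rewrite eq_sym; apply: hs; rewrite mem_head.
by apply/wequiv_cons/IH => h' hh'; apply: hs; rewrite in_cons hh' orbT.
Qed.

End WordEquivalence.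

Section BlockWords.
Variable n : nat.
Notation word := (seq (gen n)).
Notation exps := {ffun 'I_n -> nat}.

Definition exp0 : exps := [ffun => 0%N].
Definition exp_set (c : exps) (i : 'I_n) (k : nat) : exps :=
  [ffun j => if j == i then k else c j].
Definition block_word (t : 'I_n -> gen n) (c : exps) : word :=
  flatten [seq nseq (c j) (t j) | j <- enum 'I_n].

Lemma exp_setE c i k j : exp_set c i k j = if j == i then k else c j.
Proof. by rewrite ffunE. Qed.

Lemma exp_set_id c i : exp_set c i (c i) = c.
Proof. by apply/ffunP => j; rewrite exp_setE; case: eqP => // ->. Qed.

Lemma exp0P (c : exps) : c = exp0 \/ exists i, (0 < c i)%N.
Proof.
case: (pickP (fun j => 0 < c j)%N) => [i hi|h]; first by right; exists i.
by left; apply/ffunP => j; rewrite ffunE; have := h j; case: (c j).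
Qed.

Lemma block_word0 t : block_word t exp0 = [::].
Proof. by rewrite /block_word; elim: (enum 'I_n) => //= j s ->; rewrite ffunE. Qed.

Lemma mem_block_word t c g : g \in block_word t c -> exists2 j, g = t j & (0 < c j)%N.
Proof. by case/flattenP => s /mapP [j _ ->] /nseqP [-> hj]; exists j. Qed.

Lemma block_word_split t (ht : forall j, idx (t j) = j) c i :
  exists X1 X2, (forall g, g \in X1 ++ X2 -> idx g != i) /\
    forall k, block_word t (exp_set c i k) = X1 ++ nseq k (t i) ++ X2.
Proof.
rewrite /block_word; have := enum_uniq 'I_n; have := mem_enum 'I_n i.
move: (enum 'I_n) => e /splitPr [s1 s2]; rewrite cat_uniq /= => /and3P [_ h1 /andP [i_s2 _]].
have i_s1 : i \notin s1 by apply: contra h1 => h; rewrite h.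
pose blocks s := flatten [seq nseq (c j) (t j) | j <- s].
exists (blocks s1), (blocks s2); split.
  move=> g; rewrite mem_cat => /orP [] /flattenP [s /mapP [j hj ->] /nseqP [-> _]];
    by rewrite ht; apply: contraTneq hj => ->.
have same s : i \notin s -> flatten [seq nseq (exp_set c i _ j) (t j) | j <- s] = blocks s.
  by move=> i_s; congr flatten; apply/eq_in_map => j hj; rewrite exp_setE;
     case: eqP => // eji; rewrite -eji hj in i_s.
by move=> k; rewrite map_cat flatten_cat /= exp_setE eqxx !same.
Qed.

End BlockWords.

(** Normal form: every word equals some x^a y^b in S_n. *)
Section NormalForm.
Variables (K : fieldType) (n : nat).
Notation word := (seq (gen n)).
Notation exps := {ffun 'I_n -> nat}.

Definition xword (c : exps) : word := block_word (@inl 'I_n 'I_n) c.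
Definition yword (c : exps) : word := block_word (@inr 'I_n 'I_n) c.

Lemma xword0 : xword (exp0 n) = [::].
Proof. exact: block_word0. Qed.

Lemma yword0 : yword (exp0 n) = [::].
Proof. exact: block_word0. Qed.

Definition nmono := (exps * exps)%type.
Definition nmono_word (m : nmono) : word := xword m.1 ++ yword m.2.

(* Left multiplication of x^a y^b by a generator, using y_i x_i = 1. *)
Definition nmono_gen_mul (g : gen n) (m : nmono) : nmono :=
  match g with
  | inl i => (exp_set m.1 i (m.1 i).+1, m.2)
  | inr i => if (0 < m.1 i)%N then (exp_set m.1 i (m.1 i).-1, m.2)
             else (m.1, exp_set m.2 i (m.2 i).+1)
  end.

Definition nf (w : word) : nmono := foldr nmono_gen_mul (exp0 n, exp0 n) w.

Lemma wequiv_gen_mul g m : wequiv K (g :: nmono_word m) (nmono_word (nmono_gen_mul g m)).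
Proof.
case: m => a b; case: g => i /=; rewrite /nmono_word /=.
  have [X1 [X2 [hX hk]]] := @block_word_split n (@inl 'I_n 'I_n) (fun j => erefl) a i.
  rewrite /xword -{1}(exp_set_id a i) !hk -!catA /=.
  by apply: wequiv_move => h hh; apply: hX; rewrite mem_cat hh.
case: ifP => ai_gt0.
  have [X1 [X2 [hX hk]]] := @block_word_split n (@inl 'I_n 'I_n) (fun j => erefl) a i.
  rewrite /xword -{1}(exp_set_id a i) !hk -!catA /=.
  case: (a i) ai_gt0 => [|k] //= _.
  apply: (@wequiv_trans _ _ _ (X1 ++ inr i :: inl i :: nseq k (inl i) ++ X2 ++ yword b)).
    by apply: wequiv_move => h hh; apply: hX; rewrite mem_cat hh.
  exact: (wequiv_ctx X1 (nseq k (inl i) ++ X2 ++ yword b) (wequiv_yx K i)).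
have [Y1 [Y2 [hY hk]]] := @block_word_split n (@inr 'I_n 'I_n) (fun j => erefl) b i.
apply: (@wequiv_trans _ _ _ (xword a ++ inr i :: yword b)).
  apply: wequiv_move => h /mem_block_word [j -> hj] /=.
  by apply: contraTneq hj => ->; rewrite ai_gt0.
rewrite /yword -{1}(exp_set_id b i) !hk /=.
have := wequiv_ctx (xword a) [::] (@wequiv_move K n (inr i) Y1 (nseq (b i) (inr i) ++ Y2) _).
by rewrite !cats0; apply => h hh; apply: hY; rewrite mem_cat hh.
Qed.

Lemma wequiv_nf w : wequiv K w (nmono_word (nf w)).
Proof.
elim: w => [|g w IH] /=; last exact: wequiv_trans (wequiv_cons g IH) (wequiv_gen_mul _ _).
by rewrite /nmono_word xword0 yword0; apply: wequiv_refl.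
Qed.

End NormalForm.

Section ExponentOrder.
Variable n : nat.
Notation exps := {ffun 'I_n -> nat}.

Definition exp_le (c d : exps) := [forall j, c j <= d j]%N.
Definition exp_sub (c d : exps) : exps := [ffun j => c j - d j]%N.
Definition exp_deg (c : exps) := (\sum_j c j)%N.

Lemma exp_le_refl (c : exps) : exp_le c c.
Proof. exact/forallP. Qed.

Lemma exp0_le (c : exps) : exp_le (exp0 n) c.
Proof. by apply/forallP => j; rewrite ffunE. Qed.

Lemma exp_subE (c d : exps) j : exp_sub c d j = (c j - d j)%N.
Proof. by rewrite ffunE. Qed.

Lemma exp_sub0 (c : exps) : exp_sub c (exp0 n) = c.
Proof. by apply/ffunP => j; rewrite !ffunE subn0. Qed.

Lemma exp_subnn (c : exps) : exp_sub c c = exp0 n.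
Proof. by apply/ffunP => j; rewrite !ffunE subnn. Qed.

Lemma exp_deg_dec (c : exps) i : (0 < c i)%N -> (exp_deg (exp_set c i (c i).-1) < exp_deg c)%N.
Proof.
move=> ci_gt0; rewrite /exp_deg (bigD1 i) //= [X in (_ < X)%N](bigD1 i) //= exp_setE eqxx.
rewrite (eq_bigr (fun j => c j)) => [|j /negPf hj]; last by rewrite exp_setE hj.
by rewrite ltn_add2r prednK.
Qed.

Lemma exp_deg_lt (b c : exps) : exp_le b c -> b != c -> (exp_deg b < exp_deg c)%N.
Proof.
move=> /forallP b_le_c b_neq_c.
have [i bi_neq_ci] : exists i, b i != c i.
  apply/existsP; apply: contraNT b_neq_c => /existsPn h; apply/eqP/ffunP => j.
  by apply/eqP; have := h j; rewrite negbK.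
have bi_lt_ci : (b i < c i)%N by rewrite ltn_neqAle bi_neq_ci b_le_c.
rewrite /exp_deg (bigD1 i) //= [X in (_ < X)%N](bigD1 i) //= -addSn.
by rewrite leq_add // leq_sum // => j _; apply: b_le_c.
Qed.

Lemma exp_le_pred (b' b : exps) i : (0 < b' i)%N ->
  exp_le b' b = exp_le (exp_set b' i (b' i).-1) b && (b' i <= b i)%N.
Proof.
move=> bi_gt0; apply/forallP/andP => [h|[/forallP h bi_le]].
  split; last exact: h.
  apply/forallP => j; rewrite exp_setE; case: eqP => [->|_]; last exact: h.
  by rewrite (leq_trans (leq_pred _)).
by move=> j; have := h j; rewrite exp_setE; case: eqP => [->|].
Qed.

Lemma exp_sub_pred (b' b : exps) i : (0 < b' i)%N ->
  exp_set (exp_sub b (exp_set b' i (b' i).-1)) i (b i - (b' i).-1).-1 = exp_sub b b'.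
Proof.
move=> bi_gt0; apply/ffunP => j; rewrite exp_setE !exp_subE exp_setE.
case: eqP => [->|//]; by case: (b' i) bi_gt0 => [|k] // _; rewrite subnS.
Qed.

End ExponentOrder.

(** Vacuum vectors: vectors killed by every y_i.  On them the monomials
    y^b' x^b act by an explicit formula, and the operator
    E = prod_i (1 - x_i y_i) projects x^a u onto the line of u. *)
Section VacuumVectors.
Variables (K : fieldType) (n : nat) (V : lmodType K) (act : gen n -> V -> V).
Hypothesis act_Smod : Smodule act.
Notation exps := {ffun 'I_n -> nat}.
Notation wa := (wact act).

Lemma wact_block_word_pop (t : 'I_n -> gen n) (ht : forall j, idx (t j) = j)
    (c : exps) i v : (0 < c i)%N ->
  wa (block_word t c) v = act (t i) (wa (block_word t (exp_set c i (c i).-1)) v).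
Proof.
move=> ci_gt0; have [X1 [X2 [hX hk]]] := block_word_split ht c i.
rewrite -{1}(exp_set_id c i) !hk; case: (c i) ci_gt0 => [|k] //= _.
rewrite !wact_cat wact_cons wact_cat [RHS]act_wact_comm // => h hh.
by rewrite ht; apply: hX; rewrite mem_cat hh.
Qed.

Lemma wact_xword_pop (c : exps) i v : (0 < c i)%N ->
  wa (xword c) v = act (inl i) (wa (xword (exp_set c i (c i).-1)) v).
Proof. exact: wact_block_word_pop. Qed.

Lemma wact_yword_pop (c : exps) i v : (0 < c i)%N ->
  wa (yword c) v = act (inr i) (wa (yword (exp_set c i (c i).-1)) v).
Proof. exact: wact_block_word_pop. Qed.

Definition vproj (s : seq 'I_n) (v : V) : V :=
  foldr (fun i w => w - act (inl i) (act (inr i) w)) v s.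

Lemma vproj_cons i s v :
  vproj (i :: s) v = vproj s v - act (inl i) (act (inr i) (vproj s v)).
Proof. by []. Qed.

Lemma vproj_lin s : is_linear (vproj s).
Proof.
elim: s => [|i s IH] a x y //; rewrite !vproj_cons IH.
by rewrite !(linD (act_lin act_Smod _)) !(linZ (act_lin act_Smod _)) scalerBr opprD addrACA.
Qed.

Lemma act_vproj_comm g s v : (forall j, j \in s -> idx g != j) ->
  act g (vproj s v) = vproj s (act g v).
Proof.
elim: s => [|j s IH] hs //.
have hs' j' : j' \in s -> idx g != j' by move=> hj'; apply: hs; rewrite in_cons hj' orbT.
have gj : idx g != j by apply: hs; rewrite mem_head.
rewrite !vproj_cons (linB (act_lin act_Smod _)) (act_comm act_Smod (h := inl j)) //.
by rewrite (act_comm act_Smod (h := inr j)) // !IH.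
Qed.

Lemma vproj_x i s v : i \in s -> uniq s -> vproj s (act (inl i) v) = 0.
Proof.
elim: s => [|j s IH] //; rewrite in_cons => /orP [/eqP <-|i_s] /andP [js s_uniq].
  rewrite vproj_cons -act_vproj_comm => [|k ks]; first by rewrite (act_yx act_Smod) subrr.
  by apply: contraNneq js => /= ->.
by rewrite vproj_cons IH // !(lin0 (act_lin act_Smod _)) subr0.
Qed.

Lemma y_vproj i s v : i \in s -> act (inr i) (vproj s v) = 0.
Proof.
elim: s => [|j s IH] //; rewrite vproj_cons (linB (act_lin act_Smod _)).
have [<- _|ij] := eqVneq i j; first by rewrite (act_yx act_Smod) subrr.
rewrite in_cons (negPf ij) /= => i_s.
rewrite (act_comm act_Smod (h := inl j)) // (act_comm act_Smod (h := inr j)) //.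
by rewrite IH // !(lin0 (act_lin act_Smod _)) subr0.
Qed.

Definition vacuum_proj : V -> V := vproj (enum 'I_n).

Lemma vacuum_proj_lin : is_linear vacuum_proj.
Proof. exact: vproj_lin. Qed.

Lemma y_vacuum_proj i v : act (inr i) (vacuum_proj v) = 0.
Proof. by apply: y_vproj; rewrite mem_enum. Qed.

Variable u : V.
Hypothesis u_vacuum : forall i, act (inr i) u = 0.

Lemma vproj_vacuum s : vproj s u = u.
Proof.
by elim: s => [|i s IH] //; rewrite vproj_cons IH u_vacuum (lin0 (act_lin act_Smod _)) subr0.
Qed.

Lemma y_xword_vacuum (b : exps) i : act (inr i) (wa (xword b) u) =
  if (0 < b i)%N then wa (xword (exp_set b i (b i).-1)) u else 0.
Proof.
case: ifP => b_gt0; first by rewrite (wact_xword_pop _ b_gt0) (act_yx act_Smod).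
rewrite act_wact_comm ?u_vacuum ?(lin0 (wact_lin act_Smod _)) //.
move=> h /mem_block_word [j -> hj] /=; apply: contraTneq hj => ->; by rewrite b_gt0.
Qed.

Lemma yword_xword_vacuum (b' b : exps) : wa (yword b') (wa (xword b) u) =
  if exp_le b' b then wa (xword (exp_sub b b')) u else 0.
Proof.
have [N] := ubnP (exp_deg b'); elim: N b' => // N IH b' deg_lt.
case: (exp0P b') => [->|[i bi_gt0]].
  by rewrite exp0_le exp_sub0 yword0.
rewrite (wact_yword_pop _ bi_gt0) IH; last exact: leq_trans (exp_deg_dec bi_gt0) _.
rewrite (exp_le_pred b bi_gt0).
case: ifP => _ /=; last by rewrite (lin0 (act_lin act_Smod _)).
rewrite y_xword_vacuum exp_subE exp_setE eqxx.
have -> : (0 < b i - (b' i).-1)%N = (b' i <= b i)%N.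
  by case: (b' i) bi_gt0 => [|k] // _; rewrite subn_gt0.
by case: ifP => // _; rewrite exp_sub_pred.
Qed.

Lemma vacuum_proj_xword (c : exps) :
  vacuum_proj (wa (xword c) u) = if c == exp0 n then u else 0.
Proof.
case: (exp0P c) => [->|[i ci_gt0]]; first by rewrite eqxx xword0 /vacuum_proj vproj_vacuum.
have -> : (c == exp0 n) = false by apply: contraTF ci_gt0 => /eqP ->; rewrite ffunE.
by rewrite (wact_xword_pop _ ci_gt0) /vacuum_proj vproj_x ?mem_enum ?enum_uniq.
Qed.

(* The functional v |-> E y^a0 v reads off the coefficient of x^a0 u. *)
Lemma vacuum_proj_yword_xword (a0 a : exps) :
  vacuum_proj (wa (yword a0) (wa (xword a) u)) = if a == a0 then u else 0.
Proof.
rewrite yword_xword_vacuum; case: ifP => a0_le_a.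
  rewrite vacuum_proj_xword; congr (if _ then _ else _).
  apply/eqP/eqP => [/ffunP h|->]; last exact: exp_subnn.
  apply/ffunP => j; have := h j; rewrite !ffunE => /eqP; rewrite subn_eq0 => h1.
  by apply/eqP; rewrite eqn_leq h1; move/forallP: a0_le_a; apply.
rewrite (lin0 vacuum_proj_lin); case: eqP => // e.
by rewrite e exp_le_refl in a0_le_a.
Qed.

End VacuumVectors.

Section NormalFormCoefficients.
Variables (K : fieldType) (n : nat).

Definition nf_coef (p : ncpoly K n) (m : nmono n) := \sum_(c <- p | nf c.2 == m) c.1.
Definition nf_support (p : ncpoly K n) := undup [seq nf c.2 | c <- p].

Lemma mem_nf_support (p : ncpoly K n) c : c \in p -> nf c.2 \in nf_support p.
Proof. by move=> cp; rewrite mem_undup (map_f (fun c : K * _ => nf c.2)). Qed.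

Definition nf_defect (p : ncpoly K n) : ncpoly K n :=
  flatten [seq [:: (c.1, c.2); (- c.1, nmono_word (nf c.2))] | c <- p].

Lemma nf_defect_in_I p : in_I (nf_defect p).
Proof.
elim: p => [|c p IH] /=; first exact: I_nil.
apply: (I_add _ IH); have := I_scale c.1 (wequiv_nf K c.2).
by rewrite /= mulr1 mulrN1.
Qed.

Lemma coef_nf_defect p w :
  coef (nf_defect p) w =
    coef p w - \sum_(c <- p) (if nmono_word (nf c.2) == w then c.1 else 0).
Proof.
elim: p => [|c p IH] /=; first by rewrite !coef_nil big_nil subr0.
rewrite !coef_cons IH big_cons /=.
by case: (nmono_word _ == w); rewrite ?oppr0 ?add0r; ring.
Qed.

Lemma in_I_of_nf_coef p : (forall m, nf_coef p m = 0) -> in_I p.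
Proof.
move=> p_nf0; apply: (I_coef (nf_defect_in_I p)) => w; rewrite coef_nf_defect.
rewrite (@sum_group _ _ _ (fun c => nf c.2) _ p (nf_support p) (undup_uniq _));
  last exact: mem_nf_support.
rewrite big1_seq ?subr0 // => m _.
rewrite (eq_bigr (fun c => if nmono_word m == w then c.1 else 0)); last by move=> c /eqP ->.
by case: (nmono_word m == w); [exact: p_nf0 | rewrite big1].
Qed.

End NormalFormCoefficients.

Section CoefficientExtraction.
Variables (K : fieldType) (n : nat) (V : lmodType K) (act : gen n -> V -> V).
Hypothesis act_Smod : Smodule act.
Notation exps := {ffun 'I_n -> nat}.
Notation wa := (wact act).

Lemma wact_nf w v : wa w v = wa (nmono_word (nf w)) v.
Proof.
have := ideal_annihilates act_Smod (wequiv_nf K w) v.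
rewrite /pact !big_cons big_nil /= scale1r scaleN1r addr0 => /eqP.
by rewrite subr_eq0 => /eqP.
Qed.

Lemma pact_nf_expansion (p : ncpoly K n) v :
  pact act p v = \sum_(m <- nf_support p) nf_coef p m *: wa (nmono_word m) v.
Proof.
rewrite /pact (@sum_group _ _ _ (fun c => nf c.2) _ p (nf_support p) (undup_uniq _));
  last exact: mem_nf_support.
apply: eq_bigr => m _; rewrite scaler_suml; apply: eq_bigr => c /eqP <-.
by rewrite wact_nf.
Qed.

Variable u : V.
Hypotheses (u_neq0 : u != 0) (u_vacuum : forall i, act (inr i) u = 0).

Lemma yword_vacuum (b : exps) : wa (yword b) u = if b == exp0 n then u else 0.
Proof.
have := yword_xword_vacuum act_Smod u_vacuum b (exp0 n).
rewrite xword0 /= => ->; case: (exp0P b) => [->|[i bi_gt0]].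
  by rewrite eqxx exp_le_refl exp_subnn xword0.
have -> : (b == exp0 n) = false by apply: contraTF bi_gt0 => /eqP ->; rewrite ffunE.
suff -> : exp_le b (exp0 n) = false by [].
by apply/negbTE/forallPn; exists i; rewrite ffunE -ltnNge.
Qed.

Definition coef_functional (a0 : exps) (v : V) : V := vacuum_proj act (wa (yword a0) v).

Lemma coef_functional_lin a0 : is_linear (coef_functional a0).
Proof. exact: lin_comp (vproj_lin act_Smod _) (wact_lin act_Smod _). Qed.

Lemma nf_coef_of_sum (p : ncpoly K n) (m0 : nmono n) :
  \sum_(m <- nf_support p) (if m == m0 then nf_coef p m *: u else 0) = 0 ->
  nf_coef p m0 = 0.
Proof.
rewrite (@sum_pick _ _ _ m0 (fun m => nf_coef p m *: u)) ?undup_uniq //.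
case: ifP => [_ /eqP|m0_out _]; first by rewrite scaler_eq0 (negPf u_neq0) orbF => /eqP.
rewrite /nf_coef big1_seq // => c /andP [/eqP c_m0 cp].
by rewrite -c_m0 mem_nf_support in m0_out.
Qed.

Lemma nf_coef_extract (p : ncpoly K n) (a0 b : exps) :
  pact act p (wa (xword b) u) = 0 ->
  (forall a b', exp_le b' b -> b' != b -> nf_coef p (a, b') = 0) ->
  nf_coef p (a0, b) = 0.
Proof.
move=> p_kills lower; apply: nf_coef_of_sum.
transitivity (coef_functional a0 (pact act p (wa (xword b) u))); last first.
  by rewrite p_kills (lin0 (coef_functional_lin a0)).
rewrite pact_nf_expansion (lin_sum (coef_functional_lin a0)).
apply: eq_bigr => -[a b'] _; rewrite (linZ (coef_functional_lin a0)).
rewrite /coef_functional /nmono_word /= !wact_cat (yword_xword_vacuum act_Smod u_vacuum b' b).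
have [b'_le_b|b'_nle_b] := boolP (exp_le b' b); last first.
  rewrite !(lin0 (wact_lin act_Smod _)) (lin0 (vacuum_proj_lin act_Smod)).
  by rewrite scaler0; case: eqP => // -[_ eb]; rewrite eb exp_le_refl in b'_nle_b.
have [eb|b'_neq_b] := eqVneq b' b; last first.
  by rewrite lower // !scale0r; case: eqP.
rewrite eb exp_subnn xword0 (vacuum_proj_yword_xword act_Smod u_vacuum).
by rewrite xpair_eqE eqxx andbT; case: ifP; rewrite ?scaler0.
Qed.

Lemma faithful_of_vacuum : faithful act.
Proof.
move=> p p_kills; apply: in_I_of_nf_coef => -[a b].
have [N] := ubnP (exp_deg b); elim: N a b => // N IH a b deg_lt.
apply: nf_coef_extract (p_kills _) _ => a' b' b'_le_b b'_neq_b.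
exact: IH (leq_trans (exp_deg_lt b'_le_b b'_neq_b) _).
Qed.

Lemma nf_coef_vacuum (p : ncpoly K n) a :
  pact act p u = 0 -> nf_coef p (a, exp0 n) = 0.
Proof.
move=> p_kills; apply: nf_coef_extract => [|a' b' /forallP b'_le0 /eqP []].
  by rewrite xword0.
by apply/ffunP => j; have := b'_le0 j; rewrite !ffunE leqn0 => /eqP.
Qed.

End CoefficientExtraction.

Section PolynomialCyclic.
Variables (K : fieldType) (n : nat).
Notation Pact := (@Pact K n).

Lemma Pn_cyclic (p : Pn K n) : exists q : ncpoly K n, pact Pact q 1 = p.
Proof.
apply: (@mpoly_generated K n (fun p => exists q : ncpoly K n, pact Pact q 1 = p)).
- by exists [:: (1, [::])]; rewrite /pact big_cons big_nil /= scale1r addr0.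
- move=> a x y [qx <-] [qy <-]; exists ([seq (a * c.1, c.2) | c <- qx] ++ qy).
  by rewrite pact_cat pact_scale.
- move=> i hi x [q <-]; exists [seq (c.1, [:: inl (Ordinal hi)] ++ c.2) | c <- q].
  by rewrite (pact_lmul (@Pn_Smodule K n)).
Qed.

Definition Pn_rep (p : Pn K n) : ncpoly K n :=
  proj1_sig (constructive_indefinite_description _ (Pn_cyclic p)).

Lemma Pn_repE p : pact Pact (Pn_rep p) 1 = p.
Proof. by rewrite /Pn_rep; case: constructive_indefinite_description. Qed.

(* If q 1 = 0 in P_n then q kills every vacuum vector of every module:
   the coefficients of q on the x^a vanish, and the x^a y^b with b != 0
   kill vacuum vectors. *)
Lemma vacuum_transfer (V : lmodType K) (act : gen n -> V -> V) u :
  Smodule act -> (forall i, act (inr i) u = 0) ->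
  forall q : ncpoly K n, pact Pact q 1 = 0 -> pact act q u = 0.
Proof.
move=> act_Smod u_vacuum q q1_0.
have q_x0 a := nf_coef_vacuum (@Pn_Smodule K n) (oner_neq0 _) (@Pact_y1 K n) a q1_0.
rewrite (pact_nf_expansion act_Smod) big1_seq // => -[a b] _ /=.
rewrite /nmono_word wact_cat (yword_vacuum act_Smod u_vacuum) /=.
case: eqP => [->|_]; first by rewrite q_x0 scale0r.
by rewrite (lin0 (wact_lin act_Smod _)) scaler0.
Qed.

End PolynomialCyclic.

Section VacuumElement.
Variables (K : fieldType) (n : nat).

Fixpoint vacuum_elem (s : seq 'I_n) : ncpoly K n :=
  if s is i :: s' then
    vacuum_elem s' ++ [seq (- c.1, inl i :: inr i :: c.2) | c <- vacuum_elem s']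
  else [:: (1, [::])].

Lemma pact_vacuum_elem (V : lmodType K) (act : gen n -> V -> V) s v :
  Smodule act -> pact act (vacuum_elem s) v = vproj act s v.
Proof.
move=> act_Smod; elim: s => [|i s IH]; first by rewrite /pact big_cons big_nil /= scale1r addr0.
rewrite /= pact_cat IH; congr (_ + _).
rewrite /pact big_map -IH /pact.
rewrite (lin_sum (lin_comp (act_lin act_Smod (inl i)) (act_lin act_Smod (inr i)))) -sumrN.
apply: eq_bigr => c _; rewrite !wact_cons scaleNr.
by rewrite (linZ (act_lin act_Smod _)) (linZ (act_lin act_Smod _)).
Qed.

(* In a faithful module the projector E is nonzero, since E 1 = 1 in P_n;
   its image consists of vacuum vectors. *)
Lemma faithful_vacuum (V : lmodType K) (act : gen n -> V -> V) :
  Smodule act -> faithful act ->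
  exists u : V, u != 0 /\ forall i, act (inr i) u = 0.
Proof.
move=> act_Smod act_faithful.
have [[v Ev_neq0]|E0] := classic (exists v, vacuum_proj act v != 0).
  by exists (vacuum_proj act v); split => // i; apply: y_vacuum_proj.
have E_in_I : in_I (vacuum_elem (enum 'I_n)).
  apply: act_faithful => v; rewrite (pact_vacuum_elem _ _ act_Smod).
  by apply: NNPP => Ev_neq0; apply: E0; exists v; apply/eqP.
have := ideal_annihilates (@Pn_Smodule K n) E_in_I 1.
rewrite (pact_vacuum_elem _ _ (@Pn_Smodule K n)) (vproj_vacuum (@Pn_Smodule K n)).
  by move/eqP; rewrite oner_eq0.
exact: Pact_y1.
Qed.

End VacuumElement.

Section IsoFromVacuum.
Variables (K : fieldType) (n : nat) (V : lmodType K) (act : gen n -> V -> V).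
Hypotheses (act_Smod : Smodule act) (act_simple : simple_mod act).
Variable u : V.
Hypotheses (u_neq0 : u != 0) (u_vacuum : forall i, act (inr i) u = 0).
Notation Pact := (@Pact K n).

Definition to_vacuum (p : Pn K n) : V := pact act (Pn_rep p) u.

Lemma to_vacuumE q : to_vacuum (pact Pact q 1) = pact act q u.
Proof.
apply/eqP; rewrite -subr_eq0; apply/eqP.
have := vacuum_transfer act_Smod u_vacuum
  (q := Pn_rep (pact Pact q 1) ++ [seq (-1 * c.1, c.2) | c <- q]).
by rewrite !pact_cat !pact_scale !scaleN1r Pn_repE subrr; apply.
Qed.

Lemma to_vacuum_lin a x y : to_vacuum (a *: x + y) = a *: to_vacuum x + to_vacuum y.
Proof.
rewrite -{1}(Pn_repE x) -{1}(Pn_repE y) -pact_scale -pact_cat to_vacuumE.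
by rewrite pact_cat pact_scale.
Qed.

Lemma to_vacuum_act g x : to_vacuum (Pact g x) = act g (to_vacuum x).
Proof.
rewrite -{1}(Pn_repE x) -[Pact g _](pact_lmul (@Pn_Smodule K n) [:: g]).
by rewrite to_vacuumE (pact_lmul act_Smod).
Qed.

Lemma to_vacuum0 : to_vacuum 0 = 0.
Proof. by have := to_vacuumE [::]; rewrite /pact !big_nil. Qed.

Lemma to_vacuum1 : to_vacuum 1 = u.
Proof.
have := to_vacuumE [:: (1, [::])].
by rewrite /pact !big_cons !big_nil /= !scale1r !addr0.
Qed.

(* Kernel and image are submodules; simplicity of P_n and of V does the rest. *)
Lemma to_vacuum_inj : injective to_vacuum.
Proof.
have ker_sub : submodule Pact (fun x => to_vacuum x = 0).
  split; first exact: to_vacuum0.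
  - by move=> a x y hx hy; rewrite to_vacuum_lin hx hy scaler0 addr0.
  - by move=> g x hx; rewrite to_vacuum_act hx (lin0 (act_lin act_Smod _)).
have [ker0 x y fxy|ker_full] := (@Pn_simple K n).2 _ ker_sub; last first.
  by move: u_neq0; rewrite -to_vacuum1 ker_full eqxx.
apply/eqP; rewrite -subr_eq0; apply/eqP/ker0.
by rewrite -scaleN1r addrC to_vacuum_lin fxy scaleN1r addNr.
Qed.

Lemma to_vacuum_surj w : exists x, to_vacuum x = w.
Proof.
have im_sub : submodule act (fun w => exists x, to_vacuum x = w).
  split; first by exists 0; apply: to_vacuum0.
  - by move=> a _ _ [x <-] [y <-]; exists (a *: x + y); rewrite to_vacuum_lin.
  - by move=> g _ [x <-]; exists (Pact g x); rewrite to_vacuum_act.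
have [im0|im_full] := act_simple.2 _ im_sub; last exact: im_full.
by move: u_neq0; rewrite (im0 u) ?eqxx //; exists 1; apply: to_vacuum1.
Qed.

Lemma iso_of_vacuum : Smod_iso Pact act.
Proof.
exists to_vacuum; split; [|exact: to_vacuum_lin|exact: to_vacuum_act].
pose g w := proj1_sig (constructive_indefinite_description _ (to_vacuum_surj w)).
have to_vacuumK w : to_vacuum (g w) = w.
  by rewrite /g; case: constructive_indefinite_description.
by exists g => [x|w] //; apply: to_vacuum_inj; rewrite to_vacuumK.
Qed.

End IsoFromVacuum.

Lemma faithful_simple_iso (K : fieldType) (n : nat) (V : lmodType K)
    (act : gen n -> V -> V) :
  Smodule act -> simple_mod act -> faithful act -> Smod_iso (@Pact K n) act.
Proof.
move=> act_Smod act_simple act_faithful.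
have [u [u_neq0 u_vacuum]] := faithful_vacuum act_Smod act_faithful.
exact: (iso_of_vacuum act_Smod act_simple u_neq0 u_vacuum).
Qed.

Theorem corollary3p3 (K : fieldType) (n : nat) :
  (* P_n is a faithful simple S_n-module ... *)
  [/\ Smodule (@Pact K n), simple_mod (@Pact K n) & faithful (@Pact K n)] /\
  (* ... and up to isomorphism the only one *)
  (forall (V : lmodType K) (act : gen n -> V -> V),
      Smodule act -> simple_mod act -> faithful act ->
      Smod_iso (@Pact K n) act) /\
  (* consequently J(S_n) = 0 and S_n is primitive *)
  jacobson_zero K n /\ primitive K n.
Proof.
have Pn_Smod := @Pn_Smodule K n.
have Pn_simp := @Pn_simple K n.
have Pn_faithful := faithful_of_vacuum Pn_Smod (oner_neq0 _) (@Pact_y1 K n).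
split=> //; split; first exact: faithful_simple_iso.
split; last by exists (Pn K n), (@Pact K n).
(* J(S_n) is contained in the annihilator of the faithful simple module P_n *)
by move=> p p_rad; apply: Pn_faithful => v; apply: p_rad.
Qed.
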